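(* Let $F$ be a finite rooted poset with root $\bot$ and height greater than $1$, such that $F$ validates $\mathbf{PL}_n$. Let $s,t$ be top (maximal) elements of $F$. Then there is a path $a_0a_1\cdots a_m$ with $a_0=s$, $a_m=t$, all $a_i\in{\uparrow^\circ\bot}$, such that for each $i$: ${\uparrow^\circ a_i}=\varnothing$ when $i$ is even, and ${\uparrow^\circ a_i}=\{a_{i-1},a_{i+1}\}$ when $i$ is odd.
   Context: For $x$ in a poset, ${\uparrow^\circ x}=\{y:y>x\}$. A path is a sequence $a_0\cdots a_m$ in which for each $i$ either $a_i<a_{i+1}$ or $a_i>a_{i+1}$. The height of a poset is the supremum of $|C|-1$ over chains $C$. A p-morphism $f$ satisfies $f(\uparrow x)=\uparrow f(x)$; an up-reduction of $F$ onto $G$ is a surjective p-morphism from an upset of $F$ onto $G$. For a finite rooted poset $Q$, $\chi(Q)$ is its Jankov–Fine formula: a frame validates $\chi(Q)$ iff it has no up-reduction onto $Q$. $\mathbf{BD}_n$ is the logic of all finite frames of height at most $n$. The 3-fork is $\{r,a,b,c\}$ with $r<a,r<b,r<c$ only; the Scott frame is $\{r,u_1,u_2,v\}$ with $r<u_1<u_2$, $r<v$ (and $r<u_2$) only. $\mathbf{PL}_n$ is the smallest intermediate logic containing $\mathbf{BD}_n$, $\chi(\text{3-fork})$ and $\chi(\text{Scott frame})$. *)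

From mathcomp Require Import all_boot.
Set Implicit Arguments. Unset Strict Implicit. Unset Printing Implicit Defensive.

Definition is_poset (T : finType) (le : rel T) : Prop :=
  reflexive le /\ antisymmetric le /\ transitive le.

Definition slt (T : finType) (le : rel T) (x y : T) : bool := le x y && (x != y).

Definition is_chain (T : finType) (le : rel T) (C : {set T}) : bool :=
  [forall x in C, forall y in C, le x y || le y x].

Definition height (T : finType) (le : rel T) : nat :=
  \max_(C : {set T} | is_chain le C) (#|C|).-1.

Definition is_upset (T : finType) (le : rel T) (U : {set T}) : Prop :=
  forall x y, x \in U -> le x y -> y \in U.

(* f restricted to the upset U is a surjective p-morphism onto (T', le'):
   f(up x) = up (f x) for x in U (up x lies inside U since U is an upset). *)
Definition up_reduction (T T' : finType) (le : rel T) (le' : rel T')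
    (U : {set T}) (f : T -> T') : Prop :=
  [/\ is_upset le U,
      (forall z : T', exists2 x, x \in U & f x = z),
      (forall x y, x \in U -> le x y -> le' (f x) (f y)) &
      (forall x z, x \in U -> le' (f x) z -> exists2 y, le x y & f y = z)].

Definition has_up_reduction (T T' : finType) (le : rel T) (le' : rel T') : Prop :=
  exists (U : {set T}) (f : T -> T'), up_reduction le le' U f.

(* The 3-fork: r = 0, a = 1, b = 2, c = 3. *)
Definition fork_le : rel 'I_4 := fun i j => (i == j) || (val i == 0).
(* The Scott frame: r = 0, u1 = 1, u2 = 2, v = 3; r < everything, u1 < u2. *)
Definition scott_le : rel 'I_4 :=
  fun i j => [|| i == j, val i == 0 | (val i == 1) && (val j == 2)].

Inductive form : Type :=
| Var of nat
| Bot
| And of form & form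
| Or of form & form
| Imp of form & form.

Fixpoint forces (T : finType) (le : rel T) (V : nat -> T -> bool) (x : T)
    (phi : form) : bool :=
  match phi with
  | Var p => V p x
  | Bot => false
  | And a b => forces le V x a && forces le V x b
  | Or a b => forces le V x a || forces le V x b
  | Imp a b => [forall y, le x y ==> (forces le V y a ==> forces le V y b)]
  end.

Definition monotone_val (T : finType) (le : rel T) (V : nat -> T -> bool) : Prop :=
  forall p x y, le x y -> V p x -> V p y.

Definition frame_valid (T : finType) (le : rel T) (phi : form) : Prop :=
  forall V, monotone_val le V -> forall x, forces le V x phi.

Definition in_BD (n : nat) (phi : form) : Prop :=
  forall (T : finType) (le : rel T), is_poset le -> height le <= n ->
    frame_valid le phi.

(* Since the set of formulas valid on a frame is an
   intermediate logic, F validates PL_n iff F validates BD_n, chi(3-fork) and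
   chi(Scott); by the defining property of Jankov--Fine formulas, F validates
   chi(Q) iff F has no up-reduction onto Q. *)
Definition validates_PL (n : nat) (T : finType) (le : rel T) : Prop :=
  [/\ (forall phi, in_BD n phi -> frame_valid le phi),
      ~ has_up_reduction le fork_le &
      ~ has_up_reduction le scott_le].

From mathcomp Require Import all_boot zify.
Set Implicit Arguments. Unset Strict Implicit. Unset Printing Implicit Defensive.

(* Call two maximal points linked when they are exactly the strict successors
   of some point; a chain of links from s to t unfolds into the required path.
   Suppose s and t lie in different link-components, P and its complement.
   The root sees maximal points on both sides, so some point x does while each
   of its strict successors sees only one side.  If one of these successors
   were not maximal, sorting them by side would give an up-reduction onto the
   Scott frame; so all are maximal, and three of them would give one onto the
   3-fork.  Thus x has exactly two strict successors, one on each side, and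
   they are linked: a contradiction.  Height > 1 gives the root a non-maximal
   successor, which keeps the path off the root.  Only the two Jankov-Fine
   formulas of PL_n are used, not BD_n. *)

Definition maximal (T : finType) (le : rel T) (z : T) : bool :=
  [forall y, ~~ slt le z y].

Section FinitePoset.

Variables (T : finType) (le : rel T).
Hypothesis le_refl : reflexive le.
Hypothesis le_anti : antisymmetric le.
Hypothesis le_trans : transitive le.

Local Notation slt := (slt le).
Local Notation maximal := (maximal le).

Lemma slt_le_trans x y z : slt x y -> le y z -> slt x z.
Proof.
case/andP=> le_xy ne_xy le_yz; rewrite /slt (le_trans le_xy le_yz).
apply: contra ne_xy => /eqP eq_xz; subst z.
by apply/eqP; apply: le_anti; rewrite le_xy le_yz.
Qed.

Lemma card_upset_slt x y : slt x y -> #|[set z | le y z]| < #|[set z | le x z]|.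
Proof.
case/andP=> le_xy ne_xy; apply: proper_card; apply/properP; split.
  by apply/subsetP => z; rewrite !inE; apply: le_trans.
exists x; rewrite !inE ?le_refl //; apply: contra ne_xy => le_yx.
by apply/eqP; apply: le_anti; rewrite le_xy le_yx.
Qed.

Lemma ex_maximal_in (P : pred T) x :
  P x -> exists2 y, P y & forall z, slt y z -> ~~ P z.
Proof.
move=> Px; case: (arg_minnP (fun y => #|[set z | le y z]|) Px) => y Py min_y.
exists y => // z lt_yz; apply: contraL (card_upset_slt lt_yz) => Pz.
by rewrite -leqNgt min_y.
Qed.

Lemma ex_maximal_above y : exists2 m, le y m & maximal m.
Proof.
have [m le_ym max_m] := ex_maximal_in (le_refl y).
exists m => //; apply/forallP => z; apply/negP => lt_mz.
move/negP: (max_m z lt_mz); apply; case/andP: lt_mz => le_mz _.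
exact: le_trans le_ym le_mz.
Qed.

Lemma maximal_le_eq z w : maximal z -> le z w -> w = z.
Proof.
move=> /forallP/(_ w) nlt_zw le_zw; apply/eqP; apply: contraNT nlt_zw => ne_wz.
by rewrite /slt le_zw eq_sym.
Qed.

(* The back condition at the root of the upset is plain surjectivity. *)
Lemma has_up_reduction_principal (T' : finType) (le' : rel T') x (f : T -> T') :
  (forall z, exists2 w, le x w & f w = z) ->
  (forall u v, le x u -> le u v -> le' (f u) (f v)) ->
  (forall u z, slt x u -> le' (f u) z -> exists2 w, le u w & f w = z) ->
  has_up_reduction le le'.
Proof.
move=> onto_f mono_f back_f; exists [set z | le x z], f; split.
- by move=> u v; rewrite !inE; apply: le_trans.
- by move=> z; have [w le_xw fw] := onto_f z; exists w; rewrite ?inE.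
- by move=> u v; rewrite inE; apply: mono_f.
move=> u z; rewrite inE => le_xu; case: (eqVneq u x) => [-> _|ne_ux].
  exact: onto_f.
by apply: back_f; rewrite /slt le_xu eq_sym ne_ux.
Qed.

Lemma scott_reduction x (A B : {set T}) :
  is_upset le A -> is_upset le B -> [disjoint A & B] ->
  (forall y, slt x y = (y \in A :|: B)) ->
  B != set0 -> (exists2 y, y \in A & ~~ maximal y) ->
  has_up_reduction le scott_le.
Proof.
move=> upA upB disAB succ_x /set0Pn[b Bb] [y Ay nmax_y].
have notB z : z \in A -> z \notin B by move=> Az; rewrite (disjointFr disAB).
have le_x z : z \in A :|: B -> le x z by rewrite -succ_x => /andP[].
have notAB : x \notin A :|: B by rewrite -succ_x /slt eqxx andbF.
pose code z := if z \in B then 3 else if z \in A then (if maximal z then 2 else 1) else 0.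
have val_f z : nat_of_ord (inord (code z) : 'I_4) = code z.
  by rewrite inordK // /code; do !case: ifP.
have f_maxA z : z \in A -> exists2 m, le z m & code m = 2.
  move=> Az; have [m le_zm max_m] := ex_maximal_above z.
  have Am := upA _ _ Az le_zm.
  by exists m; rewrite // /code (negPf (notB _ Am)) Am max_m.
apply: (has_up_reduction_principal (x := x) (f := fun z => inord (code z))).
- move=> k; rewrite -(inord_val k); case: k => [[|[|[|[|//]]]] _] /=.
  + exists x => //; congr inord; rewrite /code.
    by move: notAB; rewrite inE negb_or => /andP[/negPf-> /negPf->].
  + exists y; first by apply: le_x; rewrite inE Ay.
    by rewrite /code (negPf (notB _ Ay)) Ay (negPf nmax_y).
  + have [m le_ym code_m] := f_maxA _ Ay; exists m; last by rewrite code_m.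
    by apply: le_x; rewrite inE (upA _ _ Ay le_ym).
  + exists b; first by apply: le_x; rewrite inE Bb orbT.
    by rewrite /code Bb.
- move=> u v _ le_uv; rewrite /scott_le -!val_eqE /= !val_f /code.
  case: ifP => [Bu|_]; first by rewrite (upB _ _ Bu le_uv).
  case: ifP => [Au|_]; last by rewrite orbT.
  have Av := upA _ _ Au le_uv; rewrite (negPf (notB _ Av)) Av.
  case: (boolP (maximal u)) => [max_u|_]; first by rewrite (maximal_le_eq max_u le_uv) max_u.
  by case: (maximal v); rewrite ?orbT.
move=> u k lt_xu; rewrite /scott_le -!val_eqE /= val_f.
have code_eq w : code w = k -> inord (code w) = k by move=> ->; apply: inord_val.
case/or3P=> [/eqP/code_eq|code_u|/andP[/eqP code_u /eqP k2]]; first by exists u.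
  by move: lt_xu code_u; rewrite succ_x inE /code; do !case: ifP.
have Au : u \in A.
  by move: lt_xu code_u; rewrite succ_x inE /code; do !case: ifP.
by have [m le_um code_m] := f_maxA _ Au; exists m; rewrite // code_eq // code_m k2.
Qed.

Lemma fork_reduction x p1 p2 p3 :
  slt x p1 -> slt x p2 -> slt x p3 -> uniq [:: p1; p2; p3] ->
  (forall y, slt x y -> maximal y) -> has_up_reduction le fork_le.
Proof.
move=> lt_x1 lt_x2 lt_x3 /and3P[]; rewrite !inE negb_or => /andP[ne12 ne13] ne23 _.
move=> max_succ.
have ne_x z : slt x z -> (z == x) = false by case/andP=> _; rewrite eq_sym => /negPf.
pose code z := if z == x then 0 else if z == p1 then 1 else if z == p2 then 2 else 3.
have val_f z : nat_of_ord (inord (code z) : 'I_4) = code z.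
  by rewrite inordK // /code; do !case: ifP.
have code_x : code x = 0 by rewrite /code eqxx.
apply: (has_up_reduction_principal (x := x) (f := fun z => inord (code z))).
- move=> k; rewrite -(inord_val k); case: k => [[|[|[|[|//]]]] _] /=.
  + by exists x; rewrite ?code_x.
  + by exists p1; [case/andP: lt_x1 | rewrite /code ne_x // eqxx].
  + by exists p2; [case/andP: lt_x2 | rewrite /code ne_x // eq_sym (negPf ne12) eqxx].
  + exists p3; first by case/andP: lt_x3.
    by rewrite /code ne_x // eq_sym (negPf ne13) eq_sym (negPf ne23).
- move=> u v le_xu le_uv; rewrite /fork_le -val_eqE /= !val_f.
  case: (eqVneq u x) => [->|ne_ux]; first by rewrite code_x orbT.
  have lt_xu : slt x u by rewrite /slt le_xu eq_sym ne_ux.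
  by rewrite (maximal_le_eq (max_succ _ lt_xu) le_uv) eqxx.
move=> u k lt_xu; rewrite /fork_le -val_eqE /= val_f.
case/orP=> [/eqP code_u|]; last by rewrite /code ne_x //; do !case: ifP.
by exists u; rewrite // code_u inord_val.
Qed.

Definition tops_in (P : {set T}) y := [forall m, le y m && maximal m ==> (m \in P)].

Definition link u v :=
  [&& maximal u, maximal v & [exists c, [forall y, slt c y == (y == u) || (y == v)]]].

Lemma tops_in_le P y z : tops_in P y -> le y z -> tops_in P z.
Proof.
move=> /forallP tops_y le_yz; apply/forallP => m; apply/implyP => /andP[le_zm max_m].
by apply: (implyP (tops_y m)); rewrite (le_trans le_yz le_zm).
Qed.

Lemma tops_inCN P y : tops_in P y -> ~~ tops_in (~: P) y.
Proof.
have [m le_ym max_m] := ex_maximal_above y.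
move=> /forallP/(_ m); rewrite le_ym max_m /= => Pm; apply/negP => /forallP/(_ m).
by rewrite le_ym max_m inE Pm.
Qed.

Lemma tops_in_maximal P p : maximal p -> tops_in P p = (p \in P).
Proof.
move=> max_p; apply/forallP/idP => [/(_ p)|Pp m]; first by rewrite le_refl max_p.
by apply/implyP => /andP[/(maximal_le_eq max_p)-> _].
Qed.

Section NoForkNoScott.

Hypothesis no_fork : ~ has_up_reduction le fork_le.
Hypothesis no_scott : ~ has_up_reduction le scott_le.

Lemma maximal_successors_of_pure P x p q :
  slt x p -> tops_in P p -> slt x q -> tops_in (~: P) q ->
  (forall y, slt x y -> tops_in P y || tops_in (~: P) y) ->
  forall y, slt x y -> maximal y.
Proof.
move=> lt_xp Pp lt_xq Pq pure y lt_xy; apply/negPn/negP => nmax_y.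
wlog Py : P p q lt_xp Pp lt_xq Pq pure / tops_in P y => [wlog_P|].
  case/orP: (pure y lt_xy) => [|NPy]; first exact: wlog_P Pp lt_xq Pq pure.
  apply: (wlog_P (~: P) q p) => //; rewrite ?setCK // => z /pure.
  by rewrite orbC.
apply: no_scott; apply: (@scott_reduction x [set z | slt x z && tops_in P z]
                                           [set z | slt x z && tops_in (~: P) z]).
- move=> z w; rewrite !inE => /andP[lt_xz Pz] le_zw.
  by rewrite (slt_le_trans lt_xz le_zw) (tops_in_le Pz le_zw).
- move=> z w; rewrite !inE => /andP[lt_xz Pz] le_zw.
  by rewrite (slt_le_trans lt_xz le_zw) (tops_in_le Pz le_zw).
- rewrite disjoint_subset; apply/subsetP => z; rewrite !inE.
  by case/andP=> _ /tops_inCN/negPf->; rewrite andbF.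
- by move=> z; rewrite !inE -andb_orr; case: (boolP (slt x z)) => //= /pure ->.
- by apply/set0Pn; exists q; rewrite inE lt_xq Pq.
by exists y; rewrite // inE lt_xy Py.
Qed.

Lemma maximal_successors_pair x p q :
  (forall y, slt x y -> maximal y) -> slt x p -> slt x q -> p != q ->
  forall y, slt x y = (y == p) || (y == q).
Proof.
move=> max_succ lt_xp lt_xq ne_pq y; apply/idP/idP => [lt_xy|/orP[]/eqP-> //].
apply: contraT; rewrite negb_or => /andP[ne_yp ne_yq]; case: no_fork.
apply: (fork_reduction lt_xp lt_xq lt_xy) => //.
by rewrite /= !inE negb_or ne_pq !(eq_sym _ y) ne_yp ne_yq.
Qed.

Lemma link_closed_pure (P : {set T}) :
  (forall u v, u \in P -> link u v -> v \in P) ->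
  forall x, tops_in P x || tops_in (~: P) x.
Proof.
move=> closedP x0; apply/negPn/negP => mixed_x0.
have [x] := ex_maximal_in (P := [pred x | ~~ (tops_in P x || tops_in (~: P) x)]) mixed_x0.
rewrite /= /tops_in negb_or => /andP[/forallPn[q Nq] /forallPn[p Np]] pure_succ.
move: Nq Np; rewrite !negb_imply inE negbK.
move=> /andP[/andP[le_xq max_q] NPq] /andP[/andP[le_xp max_p] Pp].
have ne_pq : p != q by apply: contraTneq Pp => ->.
have lt_x m m' : le x m -> le x m' -> maximal m -> m != m' -> slt x m.
  move=> le_xm le_xm' max_m; rewrite /slt le_xm /=; apply: contra => /eqP eq_xm.
  by rewrite eq_xm in le_xm'; rewrite (maximal_le_eq max_m le_xm').
have lt_xp := lt_x p q le_xp le_xq max_p ne_pq.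
have lt_xq : slt x q by apply: (lt_x q p); rewrite // eq_sym.
have tops_p : tops_in P p by rewrite tops_in_maximal.
have tops_q : tops_in (~: P) q by rewrite tops_in_maximal // inE.
have pure y : slt x y -> tops_in P y || tops_in (~: P) y by move/pure_succ/negbNE.
have max_succ := maximal_successors_of_pure lt_xp tops_p lt_xq tops_q pure.
have link_pq : link p q.
  rewrite /link max_p max_q; apply/existsP; exists x; apply/forallP => y.
  by rewrite (maximal_successors_pair max_succ lt_xp lt_xq ne_pq).
by move: NPq; rewrite (closedP _ _ Pp link_pq).
Qed.

Lemma connect_link_maximal bot s t :
  (forall x, le bot x) -> maximal s -> maximal t -> connect link s t.
Proof.
move=> le_bot max_s max_t; pose P := [set m | connect link s m].
have closedP u v : u \in P -> link u v -> v \in P.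
  by rewrite !inE => su uv; apply: connect_trans su (connect1 uv).
case/orP: (link_closed_pure closedP bot) => /forallP tops.
  by move: (tops t); rewrite le_bot max_t inE.
by move: (tops s); rewrite le_bot max_s !inE connect0.
Qed.

End NoForkNoScott.

Lemma ex_nonmaximal_above_root bot :
  (forall x, le bot x) -> 1 < height le -> exists2 y, slt bot y & ~~ maximal y.
Proof.
move=> le_bot; case: (pickP [pred y | slt bot y && ~~ maximal y]) => [y /andP[]|none].
  by exists y.
rewrite ltnNge => /negP[]; apply/bigmax_leqP => C /forallP chainC.
rewrite leqNgt; apply/negP => lt2C.
have /card_gt1P[u [v [Cu Cv ne_uv]]] : 1 < #|C :\ bot|.
  by move: lt2C; rewrite (cardsD1 bot C); case: (bot \in C) => /=; lia.
have max_C w : w \in C :\ bot -> maximal w.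
  rewrite !inE => /andP[ne_wb _]; move/negbT: (none w).
  by rewrite /= /slt le_bot eq_sym ne_wb negbK.
have lt_max w z : w \in C :\ bot -> le w z -> w != z -> False.
  by move=> /max_C/forallP/(_ z) + le_wz ne_wz; rewrite /slt le_wz ne_wz.
have [uC vC] : u \in C /\ v \in C by move: Cu Cv; rewrite !inE => /andP[_ ->] /andP[_ ->].
move: (chainC u); rewrite uC => /forallP/(_ v); rewrite vC /= => /orP[le_uv|le_vu].
  exact: lt_max Cu le_uv ne_uv.
by apply: lt_max Cv le_vu _; rewrite eq_sym.
Qed.

Lemma slt_root_succ_maximal bot w : (forall x, le bot x) -> (exists2 y, slt bot y & ~~ maximal y) ->
  (forall y, slt w y -> maximal y) -> slt bot w.
Proof.
move=> le_bot [y lt_by nmax_y] max_succ; rewrite /slt le_bot /=.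
by apply: contra nmax_y => /eqP eq_bw; apply: max_succ; rewrite -eq_bw.
Qed.

Definition zigzag (bot s t : T) (m : nat) (a : nat -> T) : Prop :=
  [/\ a 0 = s /\ a m = t,
      (forall i, i < m -> slt (a i) (a i.+1) || slt (a i.+1) (a i)),
      (forall i, i <= m -> slt bot (a i)),
      (forall i, i <= m -> ~~ odd i -> forall y, ~~ slt (a i) y) &
      (forall i, i <= m -> odd i ->
         i < m /\ (forall y, slt (a i) y <-> (y = a i.-1 \/ y = a i.+1)))].

Lemma zigzag0 bot s : slt bot s -> maximal s -> zigzag bot s s 0 (fun=> s).
Proof.
move=> bot_s /forallP max_s; split=> // i; rewrite leqn0 => /eqP-> //.
Qed.

Lemma zigzag_extend bot s u v c m a :
  zigzag bot s u m a -> ~~ odd m -> maximal v ->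
  slt bot c -> slt bot v -> (forall y, slt c y = (y == u) || (y == v)) ->
  exists a', zigzag bot s v m.+2 a'.
Proof.
move=> [[a0 am] step above top mid] even_m max_v bot_c bot_v succ_c.
exists (fun i => if i <= m then a i else if i == m.+1 then c else v).
have ltSm : (m.+1 <= m) = false by rewrite ltnn.
have ltSSm : (m.+2 <= m) = false by lia.
have neSS : (m.+2 == m.+1) = false by lia.
have c_u : slt c u by rewrite succ_c eqxx.
have c_v : slt c v by rewrite succ_c eqxx orbT.
split.
- by rewrite a0 ltSSm neSS.
- move=> i; case: (ltnP i m) => [lt_im _|le_mi lt_i].
    by rewrite (ltnW lt_im) step.
  have [->|->] : i = m \/ i = m.+1 by lia.
    by rewrite leqnn ?ltSm eqxx am c_u orbT.
  by rewrite ltSm neSS eqxx c_v.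
- move=> i le_i; case: (leqP i m) => [|lt_mi]; first exact: above.
  by case: ifP.
- move=> i le_i; case: (leqP i m) => [le_im|lt_mi]; first exact: top.
  have [->|->] : i = m.+1 \/ i = m.+2 by lia.
    by rewrite /= even_m.
  by rewrite ?ltSSm neSS => _ y; apply: (forallP max_v).
move=> i le_i odd_i; case: (leqP i m) => [le_im|lt_mi].
  have [lt_im succ_i] := mid _ le_im odd_i.
  by rewrite lt_im (leq_trans (leq_pred i) le_im); split => //; lia.
have -> : i = m.+1.
  have [//|eq_i] : i = m.+1 \/ i = m.+2 by lia.
  by move: odd_i; rewrite eq_i /= negbK (negPf even_m).
rewrite /= eqxx !leqnn ltSSm neSS am; split => // y; rewrite succ_c.
by split=> [/orP[]/eqP->|[]->]; rewrite ?eqxx ?orbT; auto.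
Qed.

Lemma zigzag_of_connect_link bot s t :
  (forall x, le bot x) -> (exists2 y, slt bot y & ~~ maximal y) ->
  maximal s -> connect link s t ->
  exists m a, ~~ odd m /\ zigzag bot s t m a.
Proof.
move=> le_bot deep max_s /connectP[p + ->] {t}.
have bot_max w : maximal w -> slt bot w.
  by move=> /forallP max_w; apply: slt_root_succ_maximal => // y; rewrite (negPf (max_w y)).
suff ext u : (exists m a, ~~ odd m /\ zigzag bot s u m a) -> path link u p ->
    exists m a, ~~ odd m /\ zigzag bot s (last u p) m a.
  by move/ext; apply; exists 0, (fun=> s); split; last exact: zigzag0 (bot_max _ max_s) max_s.
elim: p u => [|v p IH] u //= [m [a [even_m zig]]] /andP[link_uv path_vp].
apply: IH path_vp; case/and3P: link_uv => max_u max_v /existsP[c /forallP succ_cb].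
have succ_c y : slt c y = (y == u) || (y == v) := eqP (succ_cb y).
have bot_c : slt bot c by apply: slt_root_succ_maximal => // y; rewrite succ_c => /orP[]/eqP->.
have [a' zig'] := zigzag_extend zig even_m max_v bot_c (bot_max _ max_v) succ_c.
by exists m.+2, a'; rewrite /= negbK.
Qed.

End FinitePoset.

Theorem lemma7p4 (n : nat) (T : finType) (le : rel T) (bot : T)
  (Hposet : is_poset le)
  (Hroot : forall x, le bot x)
  (Hheight : 1 < height le)
  (HPL : validates_PL n le)
  (s t : T)
  (Hs : forall y, ~~ slt le s y)
  (Ht : forall y, ~~ slt le t y) :
  exists (m : nat) (a : nat -> T),
    [/\ a 0 = s /\ a m = t,
        (forall i, i < m -> slt le (a i) (a i.+1) || slt le (a i.+1) (a i)),
        (forall i, i <= m -> slt le bot (a i)),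
        (forall i, i <= m -> ~~ odd i -> forall y, ~~ slt le (a i) y) &
        (forall i, i <= m -> odd i ->
           i < m /\ (forall y, slt le (a i) y <-> (y = a i.-1 \/ y = a i.+1)))].
Proof.
have [le_refl [le_anti le_trans]] := Hposet.
case: HPL => _ no_fork no_scott.
have max_s : maximal le s by apply/forallP.
have max_t : maximal le t by apply/forallP.
have deep := ex_nonmaximal_above_root Hroot Hheight.
have st := connect_link_maximal le_refl le_anti le_trans no_fork no_scott Hroot max_s max_t.
have [m [a [_ zig]]] := zigzag_of_connect_link Hroot deep max_s st.
by exists m, a.
Qed.
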